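(* Let $\alpha\in\alpha_0\mathbb{Z}$ with $\frac{1}{\sqrt2}\le|\alpha|\le1$, $d=\alpha^2/2$, and fix $s\in\mathbb{Z}$. Then the vectors $(Y_{\alpha,-n-d}\otimes Y_{\alpha,-n-d-s})(\Omega_0\otimes\Omega_0)$, $n\in\mathbb{Z}$, are mutually orthogonal and the series $\sum_{n\in\mathbb{Z}}(Y_{\alpha,-n-d}\otimes Y_{\alpha,-n-d-s})(\Omega_0\otimes\Omega_0)$ does not converge in $\hat{\mathcal H}\otimes\hat{\mathcal H}$ (the sum of the squared norms of its terms is infinite). Consequently no operator of the form $\sum_n Y_{\alpha,-n-d}\otimes Y_{\alpha,-n-d-s}$ can be defined by this series on a domain containing $\Omega_0\otimes\Omega_0$.
   Context: For $\beta\in\mathbb{R}$ let $\mathcal H_\beta$ be the Hilbert space carrying a unitary representation of the Heisenberg algebra: operators $J_{\beta,n}$, $n\in\mathbb{Z}$, with $[J_{\beta,m},J_{\beta,n}]=m\,\delta_{m+n,0}$, $J_{\beta,n}^*=J_{\beta,-n}$, $J_{\beta,0}=\beta\cdot\mathbf 1$, and a cyclic unit vector $\Omega_\beta$ with $J_{\beta,n}\Omega_\beta=0$ for $n>0$; $\mathcal H_\beta$ is the closure of the span $\mathcal H_\beta^{\rm fin}$ of the vectors $J_{\beta,-n_1}\cdots J_{\beta,-n_k}\Omega_\beta$, $n_i>0$. Fix $\alpha_0\in\mathbb{R}$ with $0<|\alpha_0|\le1$ and set $\hat{\mathcal H}=\bigoplus_{j\in\mathbb{Z}}\mathcal H_{j\alpha_0}$,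 $\hat J_n=\bigoplus_j J_{j\alpha_0,n}$. For $\alpha\in\alpha_0\mathbb{Z}$ let $c_\alpha$ be the unitary on $\hat{\mathcal H}$ mapping $\mathcal H_\beta\to\mathcal H_{\beta+\alpha}$ by $c_\alpha \hat J_{-n_1}\cdots\hat J_{-n_k}\Omega_\beta=\hat J_{-n_1}\cdots\hat J_{-n_k}\Omega_{\beta+\alpha}$ ($n_i>0$). Define the formal series $E^{\pm}(\alpha,z)=\exp\bigl(\mp\sum_{n>0}\frac{\alpha\hat J_{\pm n}}{n}z^{\mp n}\bigr)$ and $Y_\alpha(z)=c_\alpha E^-(\alpha,z)E^+(\alpha,z)z^{\alpha\hat J_0}$, where $z^{\alpha\hat J_0}$ acts as $z^{\alpha\beta}$ on $\mathcal H_\beta$. With $d=\alpha^2/2$ write $Y_\alpha(z)=\sum_{s\in\mathbb{R}}Y_{\alpha,s}z^{-s-d}$; the coefficient $Y_{\alpha,s}$ maps $\mathcal H_\beta$ into $\mathcal H_{\beta+\alpha}$ and is nonzero on $\mathcal H_\beta$ only for $s\in\mathbb{Z}-\alpha\beta-d$. For $|\alpha|\le1$ these are bounded operators, and one has $\|Y_{\alpha,-n-d}\Omega_0\|^2=\binom{2d+n-1}{n}=\frac{\Gamma(2d+n)}{\Gamma(n+1)\Gamma(2d)}$ for integers $n\ge0$ (and $Y_{\alpha,-n-d}\Omega_0=0$ for $n<0$). *)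

(* A concrete model of the charged Fock space
   \hat H^fin = (+)_j H^fin_{j alpha0} and of the vertex-operator coefficients
   Y_{alpha,s}, following the definitions of the paper literally. *)
From HB Require Import structures.
From mathcomp Require Import all_boot all_order all_algebra.
From mathcomp Require Import reals.
Set Implicit Arguments. Unset Strict Implicit. Unset Printing Implicit Defensive.
Import Order.TTheory GRing.Theory Num.Theory.
Local Open Scope ring_scope.

Section Fock.
Variable R : realType.

(* Basis vector (j, p) of \hat H^fin: the monomial
     J_{-1}^{p_0} J_{-2}^{p_1} ... J_{-k}^{p_{k-1}} Omega_{j alpha0},
   where p_i = nth 0 p i is the number of factors J_{-(i+1)}.
   (Trailing zeros in p are irrelevant; equality is tested via [occeq].) *)
Definition bas := (int * seq nat)%type.

Definition vec := seq (R * bas).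

Definition occeq (p q : seq nat) : bool :=
  all (fun k => nth 0%N p k == nth 0%N q k) (iota 0 (maxn (size p) (size q))).

(* <J_{-1}^{p_0}...Omega, same> = prod_k (k+1)^{p_k} p_k! ; distinct monomials
   (or distinct charges) are orthogonal. *)
Definition weight (p : seq nat) : R :=
  \prod_(k < size p) (((k.+1) ^ (nth 0%N p k)) * (nth 0%N p k)`!)%:R.

Definition bip (b b' : bas) : R :=
  if (b.1 == b'.1) && occeq b.2 b'.2 then weight b.2 else 0.

Definition ip (v w : vec) : R :=
  \sum_(x <- v) \sum_(y <- w) x.1 * y.1 * bip x.2 y.2.

Definition vscale (c : R) (v : vec) : vec := [seq (c * x.1, x.2) | x <- v].

Definition lin (f : bas -> vec) (v : vec) : vec :=
  flatten [seq vscale x.1 (f x.2) | x <- v].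

Definition Jcre (n : nat) (b : bas) : vec :=
  [:: (1, (b.1, incr_nth b.2 n.-1))].

(* annihilation operator \hat J_n, n > 0 :  J_n = n d/dJ_{-n} *)
Definition Jann (n : nat) (b : bas) : vec :=
  let m := nth 0%N b.2 n.-1 in
  [:: ((n * m)%:R, (b.1, set_nth 0%N b.2 n.-1 m.-1))].

Fixpoint comps (r k : nat) : seq (seq nat) :=
  match r with
  | 0 => if k == 0%N then [:: [::]] else [::]
  | r'.+1 => flatten [seq [seq i :: c | c <- comps r' (k - i)] | i <- iota 1 k]
  end.

Definition word (f : nat -> bas -> vec) (c : seq nat) (v : vec) : vec :=
  foldr (fun n w => lin (f n) w) v c.

(* Coefficient of z^k (resp. z^{-k}) in
     exp(sum_{n>0} (sg alpha / n) J_{-+n} z^{+-n})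
   = sum_r (1/r!) (sum_n (sg alpha/n) J_{-+n} z^{+-n})^r ,
   expanded literally: the coefficient of z^k of the r-th power is the sum over
   compositions (n_1,...,n_r) of k. *)
Definition expcoef (f : nat -> bas -> vec) (sgalpha : R) (k : nat) (v : vec) : vec :=
  flatten [seq flatten [seq vscale ((r`!%:R)^-1 * \prod_(n <- c) (sgalpha / n%:R))
                                  (word f c v) | c <- comps r k]
          | r <- iota 0 k.+1].

(* E^-(alpha,z) = exp(+ sum alpha J_{-n} z^n / n):  coefficient of z^k *)
Definition Eminus (alpha : R) (k : nat) (v : vec) : vec := expcoef Jcre alpha k v.
(* E^+(alpha,z) = exp(- sum alpha J_n z^{-n} / n):  coefficient of z^{-m} *)
Definition Eplus (alpha : R) (m : nat) (v : vec) : vec := expcoef Jann (- alpha) m v.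

Definition deg (p : seq nat) : nat := \sum_(k < size p) k.+1 * nth 0%N p k.

Definition cshift (a : int) (v : vec) : vec := [seq (x.1, (x.2.1 + a, x.2.2)) | x <- v].

(* Coefficient Y_{alpha,s} of  Y_alpha(z) = c_alpha E^- E^+ z^{alpha J_0}
   = sum_s Y_{alpha,s} z^{-s-d},  d = alpha^2/2,  alpha = a * alpha0,
   on a basis vector of H_beta, beta = j alpha0.  The z-power of the term
   z^k (from E^-) z^{-m} (from E^+) z^{alpha beta} is k - m + alpha beta, which
   must equal -s-d, i.e. m - k = s + d + alpha beta.  Terms with m > deg p
   vanish (E^+ lowers the degree by m), so the sum over m is finite. *)
Definition Ybas (alpha0 : R) (a : int) (s : R) (b : bas) : vec :=
  let alpha := a%:~R * alpha0 in
  let d := alpha ^+ 2 / 2 in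
  let beta := b.1%:~R * alpha0 in
  let t := s + d + alpha * beta in
  if t \is a Num.int then
    let K := Num.floor t in
    flatten [seq if (K <= m%:Z) then
                   cshift a (Eminus alpha `|m%:Z - K|%N (Eplus alpha m [:: (1, b)]))
                 else [::]
            | m <- iota 0 (deg b.2).+1]
  else [::].

Definition Ycoef (alpha0 : R) (a : int) (s : R) (v : vec) : vec := lin (Ybas alpha0 a s) v.

Definition Omega0 : vec := [:: (1, (0%Z, [::]))].

Definition tvec := seq (R * (bas * bas)).

Definition tens (v w : vec) : tvec := [seq (x.1 * y.1, (x.2, y.2)) | x <- v, y <- w].

Definition tip (u u' : tvec) : R :=
  \sum_(x <- u) \sum_(y <- u') x.1 * y.1 * (bip x.2.1 y.2.1 * bip x.2.2 y.2.2).

Definition tscale (c : R) (u : tvec) : tvec := [seq (c * x.1, x.2) | x <- u].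

Definition tlin (A B : vec -> vec) (u : tvec) : tvec :=
  flatten [seq tscale x.1 (tens (A [:: (1, x.2.1)]) (B [:: (1, x.2.2)])) | x <- u].

Definition term (alpha0 : R) (a s n : int) : tvec :=
  let alpha := a%:~R * alpha0 in
  let d := alpha ^+ 2 / 2 in
  tlin (Ycoef alpha0 a (- n%:~R - d)) (Ycoef alpha0 a (- n%:~R - d - s%:~R))
       (tens Omega0 Omega0).

Definition symrange (N : nat) : seq int := [seq i%:Z - N%:Z | i <- iota 0 (N.*2.+1)].

Definition psum (alpha0 : R) (a s : int) (N : nat) : tvec :=
  flatten [seq term alpha0 a s n | n <- symrange N].

(* Cauchy sequence in the pre-Hilbert space \hat H^fin (x) \hat H^fin, i.e.
   convergent in its completion \hat H (x) \hat H *)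
Definition tcauchy (S : nat -> tvec) : Prop :=
  forall eps : R, 0 < eps -> exists N : nat, forall M M' : nat, (N <= M)%N -> (N <= M')%N ->
    let D := S M ++ tscale (-1) (S M') in tip D D < eps.

End Fock.

(* Y_{alpha,-n-d} Omega_0 is c_alpha applied to the z^n-coefficient of
   E^-(alpha, z) Omega_0: it vanishes for n < 0 and is a combination of monomials
   of degree n otherwise, so the terms for different n are orthogonal.  Expanding
   E^- = exp(alpha L_-), L_- = sum_j J_{-j} z^j / j, over compositions and using the
   orthogonality relations of the monomials J_{-c_1} ... J_{-c_r} Omega, the squared
   norm of Y_{alpha,-n-d} Omega_0 is the z^n-coefficient F_n of
   exp(alpha^2 L) = (1 - z)^(-alpha^2), L = -log(1 - z); it obeys
   (n + 1) F_{n+1} = (n + alpha^2) F_n.  For 1/2 <= alpha^2 <= 1 the F_n decrease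
   and F_n^2 >= 1 / (4 (n + 1)), so for n >= |s| the n-th term has squared norm at
   least 1 / (8 (n + 1)) and the squared norms have a divergent harmonic minorant.
   By orthogonality, the squared distance between two symmetric partial sums is a
   block of this series, so the partial sums are not Cauchy. *)

From mathcomp Require Import all_boot all_order all_algebra.
From mathcomp Require Import reals ring lra zify.
Import Order.TTheory GRing.Theory Num.Theory.

(** * Occupation numbers and compositions *)

Definition wsum (w : nat -> nat) (p : seq nat) : nat :=
  \sum_(k < size p) w k * nth 0 p k.

Lemma wsum_widen w p N : (forall k, N <= k -> nth 0 p k = 0) ->
  wsum w p = \sum_(k < N) w k * nth 0 p k.
Proof.
have widen n M : n <= M -> (forall k, n <= k -> nth 0 p k = 0) ->
    \sum_(k < n) w k * nth 0 p k = \sum_(k < M) w k * nth 0 p k.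
  move=> nM p0; rewrite (big_ord_widen _ (fun k => w k * nth 0 p k) nM) big_mkcond.
  by apply: eq_bigr => k _; case: ltnP => // /p0 ->; rewrite muln0.
move=> p0; rewrite /wsum (widen N _ (leq_maxl N (size p))) //.
by apply: widen => [|k pk]; [exact: leq_maxr | rewrite nth_default].
Qed.
Arguments wsum_widen w {p N}.

Lemma eq_wsum w p q : (forall k, nth 0 p k = nth 0 q k) -> wsum w p = wsum w q.
Proof.
move=> pq; set N := maxn (size p) (size q).
have beyond r : size r <= N -> forall k, N <= k -> nth 0 r k = 0.
  by move=> rN k Nk; rewrite nth_default // (leq_trans rN).
rewrite (wsum_widen w (beyond p (leq_maxl _ _))) (wsum_widen w (beyond q (leq_maxr _ _))).
by apply: eq_bigr => k _; rewrite pq.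
Qed.

Lemma wsum_incr_nth w p j : wsum w (incr_nth p j) = wsum w p + w j.
Proof.
set N := maxn (size p) j.+1.
have jN : j < N := leq_maxr _ _.
have pN k : N <= k -> nth 0 p k = 0.
  by move=> Nk; rewrite nth_default // (leq_trans (leq_maxl _ _) Nk).
rewrite (wsum_widen w pN) (wsum_widen w (p := incr_nth p j) (N := N)); last first.
  by move=> k Nk; rewrite nth_incr_nth pN // (ltn_eqF (leq_trans jN Nk)).
have delta : \sum_(k < N) w k * (j == k) = w j.
  rewrite (bigD1 (Ordinal jN)) //= eqxx muln1 big1 ?addn0 // => k.
  by rewrite -val_eqE /= eq_sym => /negbTE ->; rewrite muln0.
by rewrite -delta -big_split; apply: eq_bigr => k _; rewrite nth_incr_nth mulnDr addnC.
Qed.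

Lemma leq_nth_wsum w p k : w k * nth 0 p k <= wsum w p.
Proof.
case: (ltnP k (size p)) => kp; last by rewrite nth_default // muln0.
by rewrite /wsum (bigD1 (Ordinal kp)) //= leq_addr.
Qed.

Definition nparts (p : seq nat) : nat := wsum (fun=> 1) p.

Lemma deg_wsum p : deg p = wsum (fun k => k.+1) p. Proof. by []. Qed.

Lemma occeqP p q : reflect (forall k, nth 0 p k = nth 0 q k) (occeq p q).
Proof.
apply: (iffP allP) => [pq k | pq k _]; last exact/eqP/pq.
case: (ltnP k (maxn (size p) (size q))) => kpq.
  by apply/eqP/pq; rewrite mem_iota add0n.
by rewrite !nth_default // (leq_trans _ kpq) // ?leq_maxl ?leq_maxr.
Qed.

Definition decr_nth (q : seq nat) j := set_nth 0 q j (nth 0 q j).-1.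

Lemma incr_nth_decr_nth q j : 0 < nth 0 q j ->
  forall k, nth 0 (incr_nth (decr_nth q j) j) k = nth 0 q k.
Proof.
move=> qj k; rewrite nth_incr_nth nth_set_nth /=.
by case: (eqVneq k j) => [->|//]; rewrite add1n prednK.
Qed.

Lemma occeq_incr_nth p q j :
  occeq (incr_nth p j) q = (0 < nth 0 q j) && occeq p (decr_nth q j).
Proof.
apply/occeqP/andP => [pq | [qj /occeqP pq] k].
  have pqj := pq j; rewrite nth_incr_nth eqxx in pqj.
  split; first by rewrite -pqj.
  apply/occeqP => k; rewrite nth_set_nth /=; case: eqP => [->|/eqP nkj].
    by rewrite -pqj.
  by rewrite -pq nth_incr_nth eq_sym (negbTE nkj).
by rewrite -(incr_nth_decr_nth _ _ qj) !nth_incr_nth pq.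
Qed.

Lemma wsum_decr_nth w q j : 0 < nth 0 q j -> wsum w (decr_nth q j) + w j = wsum w q.
Proof. by move=> qj; rewrite -wsum_incr_nth; apply: eq_wsum; apply: incr_nth_decr_nth. Qed.

Lemma wsum_occeq_nil w q : occeq [::] q -> wsum w q = 0.
Proof.
move=> /occeqP q0; rewrite (@eq_wsum w q [::]) => [|k]; last by rewrite -q0.
by rewrite /wsum big_ord0.
Qed.

Lemma nparts_eq0 q : (nparts q == 0) = occeq [::] q.
Proof.
apply/idP/idP => [/eqP q0 | nq]; last by rewrite /nparts wsum_occeq_nil.
apply/occeqP => k; have := leq_nth_wsum (fun=> 1) q k.
rewrite -/(nparts q) q0 mul1n leqn0 nth_nil.
by move/eqP ->.
Qed.

Lemma nparts_deg q m : deg q = m -> nparts q = \sum_(k < m) nth 0 q k.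
Proof.
move=> dq; rewrite /nparts (wsum_widen _ (N := m)) => [|k mk].
  by apply: eq_bigr => k _; rewrite mul1n.
have [//|qk] := posnP (nth 0 q k).
have := leq_nth_wsum (fun i => i.+1) q k; rewrite -deg_wsum dq.
have := leq_pmulr k.+1 qk; lia.
Qed.

Lemma decr_nth_nparts_deg q i r m : 0 < i <= m -> 0 < nth 0 q i.-1 ->
  (nparts (decr_nth q i.-1) == r) && (deg (decr_nth q i.-1) == m - i) =
  (nparts q == r.+1) && (deg q == m).
Proof.
move=> /andP[i0 im] qi; rewrite /nparts !deg_wsum.
rewrite -(wsum_decr_nth (fun=> 1) _ _ qi) -(wsum_decr_nth (fun k => k.+1) _ _ qi) /= prednK //.
by rewrite addn1 eqSS; congr (_ && _); apply/eqP/eqP; lia.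
Qed.

Lemma mem_comps r k c : c \in comps r k ->
  [/\ size c = r, sumn c = k & all (fun i => 0 < i) c].
Proof.
elim: r k c => [|r IH] k c /=.
  by case: k => [|k] //=; rewrite inE => /eqP ->.
move=> /flattenP [s /mapP [i ik ->]] /mapP [c' c'k ->].
have [c'r c'k' c'0] := IH _ _ c'k; rewrite mem_iota add1n ltnS in ik.
by case/andP: ik => i0 ik; rewrite /= c'r c'k' c'0 andbT subnKC.
Qed.

Lemma size_le_sumn c : all (fun i => 0 < i) c -> size c <= sumn c.
Proof. by elim: c => [|i c IH] //= /andP [i0 /IH]; rewrite -add1n; apply: leq_add. Qed.

(* Occupation numbers of the monomial J_{-c_1} ... J_{-c_r} Omega. *)
Definition occ_of_comp (c : seq nat) : seq nat :=
  foldr (fun n p => incr_nth p n.-1) [::] c.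

Lemma nparts_occ_of_comp c : nparts (occ_of_comp c) = size c.
Proof.
elim: c => [|i c IH] /=; first by rewrite /nparts /wsum big_ord0.
by rewrite /nparts wsum_incr_nth -/(nparts _) IH addn1.
Qed.

Lemma deg_occ_of_comp c : all (fun i => 0 < i) c -> deg (occ_of_comp c) = sumn c.
Proof.
elim: c => [|i c IH] /=; first by rewrite /deg big_ord0.
by case/andP => i0 c0; rewrite deg_wsum wsum_incr_nth -deg_wsum IH // prednK // addnC.
Qed.

Lemma big_iota1 (T : Type) (idx : T) (op : T -> T -> T) m (F : nat -> T) :
  \big[op/idx]_(i <- iota 1 m) F i = \big[op/idx]_(k < m) F k.+1.
Proof.
have -> : iota 1 m = index_iota 1 m.+1 by rewrite /index_iota subSS subn0.
by rewrite big_add1 big_mkord.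
Qed.

Local Open Scope ring_scope.

Section Norms.
Context {R : realType}.

Lemma sum_if_eq (T : eqType) (s : seq T) x (y : R) : uniq s ->
  \sum_(i <- s) (if x == i then y else 0) = if x \in s then y else 0.
Proof.
move=> us; case: ifP => xs; last first.
  by rewrite big_seq big1 // => i si; case: eqP => // xi; rewrite xi si in xs.
rewrite -big_mkcond (eq_bigl (pred1 x)) => [|j]; last exact: eq_sym.
by rewrite -big_filter filter_pred1_uniq // big_seq1.
Qed.

Lemma weight_widen p N : (size p <= N)%N ->
  weight R p = \prod_(k < N) ((k.+1 ^ nth 0%N p k) * (nth 0%N p k)`!)%:R.
Proof.
move=> pN; rewrite /weight.
rewrite (big_ord_widen _ (fun k => ((k.+1 ^ nth 0%N p k) * (nth 0%N p k)`!)%:R : R) pN).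
by rewrite big_mkcond; apply: eq_bigr => k _; case: ltnP => // /(nth_default 0%N) ->.
Qed.

Lemma weight_incr_nth p j :
  weight R (incr_nth p j) = (j.+1 * (nth 0%N p j).+1)%:R * weight R p.
Proof.
set N := maxn (size p) j.+1.
have jN : (j < N)%N := leq_maxr _ _.
have incrN : (size (incr_nth p j) <= N)%N.
  by rewrite size_incr_nth; case: ifP => _; [exact: leq_maxl | exact: leq_maxr].
rewrite (weight_widen _ _ incrN) (weight_widen _ _ (leq_maxl (size p) j.+1)) -/N.
rewrite (bigD1 (Ordinal jN)) //= [in RHS](bigD1 (Ordinal jN)) //= mulrA.
congr (_ * _); first by rewrite nth_incr_nth eqxx add1n -natrM expnS factS mulnACA.
apply: eq_bigr => i; rewrite -val_eqE /= => ij.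
by rewrite nth_incr_nth eq_sym (negbTE ij).
Qed.

Definition mono_ip p q : R := if occeq p q then weight R p else 0.

Lemma bip_mono j p q : bip R (j, p) (j, q) = mono_ip p q.
Proof. by rewrite /bip /= eqxx. Qed.

Lemma mono_ip_incr_nth i p q : (0 < i)%N ->
  (i%:R)^-1 * mono_ip (incr_nth p i.-1) q =
  (nth 0%N q i.-1)%:R * mono_ip p (decr_nth q i.-1).
Proof.
move=> i0; rewrite /mono_ip occeq_incr_nth.
have [->|qi] := posnP (nth 0%N q i.-1); first by rewrite mulr0 mul0r.
case pq: (occeq p _) => /=; last by rewrite !mulr0.
rewrite weight_incr_nth mulrA; congr (_ * _).
have := occeqP _ _ pq i.-1; rewrite nth_set_nth /= eqxx => ->.
rewrite !prednK // natrM mulrA mulVf ?mul1r //.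
by rewrite pnatr_eq0 -lt0n.
Qed.

Definition invprod (c : seq nat) : R := \prod_(i <- c) (i%:R)^-1.

(* The compositions with occupation numbers q are the r! / prod_k q_k! orderings of
   its parts, and [invprod] cancels the remaining factor of the weight of q. *)
Lemma sum_comps_mono_ip r m q :
  \sum_(c <- comps r m) invprod c * mono_ip (occ_of_comp c) q =
  if (nparts q == r) && (deg q == m) then (r`!)%:R else 0.
Proof.
elim: r m q => [|r IH] m q.
  rewrite nparts_eq0; case: m => [|m] /=.
    rewrite big_seq1 /invprod big_nil mul1r /mono_ip /=.
    case q0: (occeq [::] q) => //=.
    by rewrite deg_wsum wsum_occeq_nil // /weight big_ord0.
  rewrite big_nil; case q0: (occeq [::] q) => //=.
  by rewrite deg_wsum wsum_occeq_nil.
pose C : R := if (nparts q == r.+1) && (deg q == m) then (r`!)%:R else 0.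
rewrite /= big_flatten /= big_map.
transitivity (\sum_(i <- iota 1 m) (nth 0%N q i.-1)%:R * C).
  rewrite !big_seq; apply: eq_bigr => i; rewrite mem_iota add1n ltnS => /andP[i0 im].
  rewrite big_map.
  under eq_bigr => c _ do rewrite /invprod big_cons -/(invprod c) /= mulrAC
      mono_ip_incr_nth // -mulrA [X in _ * X]mulrC.
  rewrite -big_distrr /= IH.
  have [->|qi] := posnP (nth 0%N q i.-1); first by rewrite !mul0r.
  by rewrite decr_nth_nparts_deg // i0.
rewrite -big_distrl /= -natr_sum /C.
case: ifP => [/andP[/eqP qr /eqP qm] | _]; last by rewrite mulr0.
by rewrite factS natrM -qr (nparts_deg _ _ qm) big_iota1.
Qed.

(** * The coefficients of (1 - z)^(-c) *)

Definition compsum r k : R := \sum_(c <- comps r k) invprod c.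

Lemma compsum_eq0 r k : (k < r)%N -> compsum r k = 0.
Proof.
move=> kr; rewrite /compsum big_seq big1 // => c /mem_comps[cr ck /size_le_sumn].
by rewrite cr ck leqNgt kr.
Qed.

(* Truncation of -log(1 - z) = \sum_(j > 0) z^j / j. *)
Definition logpoly K : {poly R} :=
  \poly_(j < K) (if j == 0%N then 0 else (j%:R)^-1).

Lemma coef_logpolyX K r k : (k < K)%N -> (logpoly K ^+ r)`_k = compsum r k.
Proof.
elim: r k => [|r IH] k kK.
  rewrite expr0 coef1 /compsum; case: k kK => [|k] kK /=.
    by rewrite big_seq1 /invprod big_nil.
  by rewrite big_nil.
rewrite exprS coefM big_ord_recl /= /logpoly coef_poly (leq_ltn_trans (leq0n _) kK).
rewrite /= mul0r add0r /compsum /= big_flatten /= big_map big_iota1 /=.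
apply: eq_bigr => j _.
rewrite -/(logpoly K) coef_poly /bump /= add1n (leq_ltn_trans (ltn_ord j) kK) /=.
rewrite IH; last by apply: leq_ltn_trans kK; rewrite leq_subr.
by rewrite /compsum big_distrr big_map; apply: eq_bigr => c _; rewrite /invprod big_cons.
Qed.

(* Coefficient of z^k in (L^r)' = r L^(r-1) L', where L' = 1 + z + z^2 + ... *)
Lemma compsum_rec r k :
  k.+1%:R * compsum r k.+1 = r%:R * \sum_(j < k.+1) compsum r.-1 (k - j).
Proof.
rewrite -(@coef_logpolyX k.+2) // mulr_natl -coef_deriv deriv_exp coefMn coefM mulr_natl.
congr (_ *+ _); apply: eq_bigr => j _.
rewrite coef_deriv /logpoly coef_poly.
rewrite ltnS (ltn_ord j) /= -/(logpoly k.+2).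
rewrite -[_ *+ j.+1]mulr_natr mulVf ?pnatr_eq0 // mul1r coef_logpolyX //.
by rewrite ltnS (leq_trans (leq_subr _ _)).
Qed.

(* The coefficient of z^k in exp(c L) = (1 - z)^-c, i.e. binomial(c + k - 1, k). *)
Definition negbin (c : R) k : R := \sum_(r < k.+1) c ^+ r / (r`!)%:R * compsum r k.

Lemma negbin_widen c N k : (k < N)%N ->
  \sum_(r < N) c ^+ r / (r`!)%:R * compsum r k = negbin c k.
Proof.
move=> kN; rewrite /negbin (big_ord_widen _ (fun r => c ^+ r / (r`!)%:R * compsum r k) kN).
rewrite [RHS]big_mkcond; apply: eq_bigr => r _; case: ltnP => // kr.
by rewrite compsum_eq0 ?mulr0.
Qed.

Lemma negbin0 c : negbin c 0 = 1.
Proof. by rewrite /negbin big_ord1 /compsum big_seq1 /invprod big_nil mulr1 divr1. Qed.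

Lemma negbin_conv c k :
  k.+1%:R * negbin c k.+1 = c * \sum_(j < k.+1) negbin c (k - j).
Proof.
rewrite /negbin big_distrr /=.
under eq_bigr => r _ do rewrite mulrCA compsum_rec.
rewrite big_ord_recl /= mul0r mulr0 add0r.
have shift (r : 'I_k.+1) : c ^+ r.+1 / (r.+1`!)%:R * (r.+1%:R * \sum_(j < k.+1) compsum r (k - j))
    = c * (c ^+ r / (r`!)%:R * \sum_(j < k.+1) compsum r (k - j)).
  rewrite factS natrM exprS.
  have r0 : (r.+1%:R : R) != 0 by rewrite pnatr_eq0.
  have fr0 : ((r`!)%:R : R) != 0 by rewrite pnatr_eq0 -lt0n fact_gt0.
  by field; rewrite fr0 nat1r r0.
under eq_bigr => r _ do rewrite /bump /= add1n shift.
rewrite -big_distrr /=; congr (_ * _).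
under eq_bigr => r _ do rewrite big_distrr /=.
rewrite exchange_big /=; apply: eq_bigr => j _.
by rewrite negbin_widen // ltnS leq_subr.
Qed.

Lemma negbin_rec c k : k.+1%:R * negbin c k.+1 = (k%:R + c) * negbin c k.
Proof.
case: k => [|k]; first by rewrite negbin_conv big_ord1 subn0 add0r.
rewrite negbin_conv big_ord_recl /= subn0 mulrDr.
under eq_bigr => j _ do rewrite /bump /= add1n subSS.
by rewrite -negbin_conv mulrDl addrC mulrC.
Qed.

Lemma negbinS c k : negbin c k.+1 = (k%:R + c) / k.+1%:R * negbin c k.
Proof.
have k0 : (k.+1%:R : R) != 0 by rewrite pnatr_eq0.
by rewrite mulrAC -negbin_rec mulrAC mulfV // mul1r.
Qed.

Lemma negbin_gt0 c k : 0 < c -> 0 < negbin c k.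
Proof.
move=> c0; elim: k => [|k IH]; first by rewrite negbin0.
by rewrite negbinS mulr_gt0 // divr_gt0 ?ltr0n // ltr_wpDl ?ler0n.
Qed.

Lemma negbin_decr c i j : 0 < c -> c <= 1 -> (i <= j)%N -> negbin c j <= negbin c i.
Proof.
move=> c0 c1 /subnK <-; elim: (j - i)%N => [|n IH]; first by rewrite add0n.
rewrite addSn negbinS (le_trans _ IH) //.
apply: ler_piMl; first exact/ltW/negbin_gt0.
by rewrite ler_pdivrMr ?ltr0n // mul1r -nat1r; lra.
Qed.

Lemma negbin_sqr_ge c k : 1 / 2 <= c -> c <= 1 -> 1 <= 4 * k.+1%:R * negbin c k ^+ 2.
Proof.
move=> c12 c1; have c0 : 0 < c by lra.
(* For n >= 1 the sharper bound 1 <= 4 n (negbin c n)^2 propagates, as (n + 1/2)^2 >= n (n + 1). *)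
have sharp n : (0 < n)%N -> 1 <= 4 * n%:R * negbin c n ^+ 2.
  elim: n => [//|[|n] IH _].
    by rewrite negbinS negbin0 add0r mulr1 divr1; nra.
  have x0 := negbin_gt0 c n.+1 c0.
  have rec := negbin_rec c n.+1; rewrite -[n.+2%:R]natr1 in rec *.
  move: rec (IH isT) x0; set x := negbin c n.+1; set y := negbin c n.+2.
  set K : R := n.+1%:R => rec IHx x0; have K1 : 1 <= K by rewrite ler1n.
  set z := (K + 1) * y.
  have xz : (K + 1 / 2) * x <= z by rewrite /z rec ler_wpM2r ?(ltW x0) //; lra.
  have xz2 : ((K + 1 / 2) * x) ^+ 2 <= z ^+ 2.
    have a0 : 0 <= (K + 1 / 2) * x by rewrite mulr_ge0 ?(ltW x0) //; lra.
    by rewrite lerXn2r ?nnegrE // (le_trans a0 xz).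
  have Kz : K * (K + 1) <= 4 * K * z ^+ 2.
    have : (K + 1 / 2) ^+ 2 * 1 <= (K + 1 / 2) ^+ 2 * (4 * K * x ^+ 2).
      by rewrite ler_wpM2l ?sqr_ge0.
    rewrite exprMn in xz2; nra.
  have : K + 1 <= 4 * z ^+ 2 by nra.
  rewrite /z exprMn; nra.
case: k => [|k]; first by rewrite negbin0 expr1n mulr1; lra.
have := sharp k.+1 isT; have := sqr_ge0 (negbin c k.+1).
rewrite -[k.+2%:R]natr1; nra.
Qed.

(** * Vacuum vectors of the vertex operators *)

Definition Ecoef (al : R) r c : R := ((r`!)%:R)^-1 * \prod_(n <- c) (al / n%:R).

Lemma EcoefE al r c : size c = r -> Ecoef al r c = al ^+ r / (r`!)%:R * invprod c.
Proof.
move=> <-; rewrite /Ecoef /invprod mulrC mulrAC; congr (_ * _).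
by elim: c => [|n c IH]; rewrite ?big_nil ?mulr1 // !big_cons IH exprS /=; ring.
Qed.

Definition Evac (al u : R) (j : int) k : vec R :=
  [seq (Ecoef al r c * u, (j, occ_of_comp c)) | r <- iota 0 k.+1, c <- comps r k].

Lemma Eminus_vac al u j k : Eminus al k [:: (u, (j, [::]))] = Evac al u j k.
Proof.
have word_vac c : word (Jcre R) c [:: (u, (j, [::]))] = [:: (u, (j, occ_of_comp c))].
  by elim: c => [|n c IH] //=; rewrite IH /lin /= mulr1.
rewrite /Eminus /expcoef; congr flatten; apply: eq_map => r /=.
rewrite -[RHS]flatten_seq1 -map_comp; congr flatten; apply: eq_map => c /=.
by rewrite word_vac.
Qed.

Lemma ip_Evac_mono al u j k r' m c' : c' \in comps r' m ->
  \sum_(x <- Evac al u j k) x.1 * bip R x.2 (j, occ_of_comp c') =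
  if k == m then u * al ^+ r' else 0.
Proof.
case/mem_comps => c'r c'm c'0; rewrite big_allpairs_dep /=.
transitivity (\sum_(r <- iota 0 k.+1) u * (al ^+ r / (r`!)%:R) *
   (if (r' == r) && (m == k) then (r`!)%:R else 0)).
  apply: eq_bigr => r _; rewrite -c'r -c'm -nparts_occ_of_comp -(deg_occ_of_comp _ c'0).
  rewrite -sum_comps_mono_ip big_distrr big_seq [RHS]big_seq; apply: eq_bigr => c.
  by case/mem_comps => cr _ _; rewrite bip_mono EcoefE //=; ring.
have [km|_] := eqVneq k m; last by rewrite big1 // => r _; rewrite andbF mulr0.
rewrite (eq_bigr (fun r => if r' == r then u * al ^+ r' else 0)) => [|r _].
  by rewrite sum_if_eq ?iota_uniq // mem_iota add0n ltnS km -c'r -c'm size_le_sumn.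
rewrite andbT; case: eqP => [<-|_]; last by rewrite mulr0.
by rewrite -mulrA divfK // pnatr_eq0 -lt0n fact_gt0.
Qed.

Lemma ip_Evac al u u' j k m :
  ip (Evac al u j k) (Evac al u' j m) = if k == m then u * u' * negbin (al ^+ 2) k else 0.
Proof.
rewrite /ip exchange_big big_allpairs_dep /=.
transitivity (\sum_(r <- iota 0 m.+1) \sum_(c <- comps r m)
    (if k == m then u * al ^+ r else 0) * (Ecoef al r c * u')).
  apply: eq_bigr => r _; rewrite big_seq [RHS]big_seq; apply: eq_bigr => c cr.
  rewrite -(ip_Evac_mono al u j k _ _ _ cr) big_distrl /=.
  by apply: eq_bigr => x _; rewrite mulrAC.
have [<-|_] := eqVneq k m; last by rewrite big1 // => r _; rewrite big1 // => c _; rewrite mul0r.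
have -> : iota 0 k.+1 = index_iota 0 k.+1 by rewrite /index_iota subn0.
rewrite big_mkord /negbin big_distrr; apply: eq_bigr => r _.
rewrite /compsum !big_distrr big_seq [RHS]big_seq /=; apply: eq_bigr => c.
by case/mem_comps => cr _ _; rewrite EcoefE // exprAC expr2; ring.
Qed.

Definition Yvac (al0 : R) (a n : int) : vec R :=
  Ycoef al0 a (- n%:~R - (a%:~R * al0) ^+ 2 / 2) (Omega0 R).

Lemma Yvac_E al0 a n :
  Yvac al0 a n = if 0 <= n then Evac (a%:~R * al0) 1 a `|n|%N else [::].
Proof.
rewrite /Yvac /Ycoef /lin /Omega0 /= /Ybas /=.
have -> : - n%:~R - (a%:~R * al0) ^+ 2 / 2 + (a%:~R * al0) ^+ 2 / 2 +
    a%:~R * al0 * ((0 : int)%:~R * al0) = (- n)%:~R :> R.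
  by rewrite mul0r mulr0 addr0 rmorphN /=; ring.
(* On the vacuum only the z^0-coefficient of E^+, the identity, survives. *)
rewrite intr_int intrKfloor /deg big_ord0 /= cats0 oppr_le0.
case: ifP => _ //; rewrite cats0 sub0r opprK /Eplus /expcoef /= big_nil invr1 !mulr1.
rewrite Eminus_vac /cshift /vscale /Evac !map_allpairs.
by apply: eq_allpairs => r c /=; rewrite mul1r add0r.
Qed.

Definition ynorm (c : R) (n : int) : R := if 0 <= n then negbin c `|n|%N else 0.

Lemma ynorm_ge0 c n : 0 < c -> 0 <= ynorm c n.
Proof. by move=> c0; rewrite /ynorm; case: ifP => // _; exact/ltW/negbin_gt0. Qed.

Lemma ip_Yvac al0 a n m :
  ip (Yvac al0 a n) (Yvac al0 a m) = if n == m then ynorm ((a%:~R * al0) ^+ 2) n else 0.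
Proof.
rewrite !Yvac_E /ynorm.
have [n0|n0] := boolP (0 <= n); last by rewrite /ip big_nil; case: eqP.
have [m0|m0] := boolP (0 <= m); last first.
  rewrite /ip big1 => [|x _]; last by rewrite big_nil.
  by case: eqVneq => [nm|//]; move: m0; rewrite -nm n0.
rewrite ip_Evac !mul1r; congr (if _ then _ else _).
by apply/eqP/eqP => [nm|->//]; rewrite -(gez0_abs n0) -(gez0_abs m0) nm.
Qed.

Lemma tip_tens (v w v' w' : vec R) : tip (tens v w) (tens v' w') = ip v v' * ip w w'.
Proof.
rewrite /tip /ip /tens big_allpairs_dep big_distrl; apply: eq_bigr => x _ /=.
rewrite big_distrl /=.
under eq_bigr => y _ do rewrite big_allpairs_dep.
under [RHS]eq_bigr => x' _ do rewrite big_distrr.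
rewrite [RHS]exchange_big /=; apply: eq_bigr => y _ /=; apply: eq_bigr => x' _ /=.
by rewrite big_distrr /=; apply: eq_bigr => y' _ /=; ring.
Qed.

Lemma tipZl k (u w : tvec R) : tip (tscale k u) w = k * tip u w.
Proof.
rewrite /tip /tscale big_map big_distrr; apply: eq_bigr => x _ /=.
by rewrite big_distrr; apply: eq_bigr => y _ /=; ring.
Qed.

Lemma tipZr k (u w : tvec R) : tip u (tscale k w) = k * tip u w.
Proof.
rewrite /tip big_distrr; apply: eq_bigr => x _ /=.
by rewrite /tscale big_map big_distrr; apply: eq_bigr => y _ /=; ring.
Qed.

Lemma tip_catl (u v w : tvec R) : tip (u ++ v) w = tip u w + tip v w.
Proof. by rewrite /tip big_cat. Qed.

Lemma tip_catr (u v w : tvec R) : tip w (u ++ v) = tip w u + tip w v.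
Proof. by rewrite /tip -big_split; apply: eq_bigr => x _; rewrite big_cat. Qed.

Lemma tip_flattenl (us : seq (tvec R)) w : tip (flatten us) w = \sum_(u <- us) tip u w.
Proof. by rewrite /tip big_flatten. Qed.

Lemma tip_flattenr (us : seq (tvec R)) w : tip w (flatten us) = \sum_(u <- us) tip w u.
Proof. by rewrite /tip; under eq_bigr => x _ do rewrite big_flatten; rewrite exchange_big. Qed.

(* [u ++ tscale (-1) v] represents u - v. *)
Lemma tip_cat_opp (u v : tvec R) :
  tip (u ++ tscale (-1) v) (u ++ tscale (-1) v) = tip u u - tip u v - tip v u + tip v v.
Proof. by rewrite tip_catl !tip_catr !tipZl !tipZr; ring. Qed.

Lemma tip_term al0 a s n m :
  tip (term al0 a s n) (term al0 a s m) =
  if n == m then ynorm ((a%:~R * al0) ^+ 2) n * ynorm ((a%:~R * al0) ^+ 2) (n + s) else 0.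
Proof.
have termE k : term al0 a s k = tscale (1 * 1) (tens (Yvac al0 a k) (Yvac al0 a (k + s))).
  rewrite /term /tlin /= cats0 /Yvac; congr (tscale _ (tens _ (Ycoef _ _ _ _))).
  by rewrite rmorphD /=; ring.
rewrite !termE tipZl tipZr tip_tens !ip_Yvac !mul1r.
by case: eqVneq => [->|_]; rewrite ?eqxx ?mul0r.
Qed.

(** * Divergence of the squared norms *)

Lemma tip_term_lb (al0 : R) a s (k : nat) :
  1 / 2 <= (a%:~R * al0) ^+ 2 -> (a%:~R * al0) ^+ 2 <= 1 -> (absz s <= k)%N ->
  1 / (8 * k.+1%:R) <= tip (term al0 a s k) (term al0 a s k).
Proof.
set c := (a%:~R * al0) ^+ 2 => c12 c1 sk; have c0 : 0 < c by lra.
rewrite tip_term eqxx /ynorm /= (_ : 0 <= k%:Z + s); last by lia.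
(* Both factors dominate negbin c (k + |s|) by monotonicity, and k + |s| < 2 (k + 1). *)
set K := (k + absz s)%N.
have ksK : (absz (k%:Z + s)%R <= K)%N by lia.
have := negbin_decr _ _ _ c0 c1 (leq_addr (absz s) k); have := negbin_decr _ _ _ c0 c1 ksK.
have := ltW (negbin_gt0 c K c0); have := negbin_sqr_ge c K c12 c1.
have K2 : (K.+1%:R : R) <= 2 * k.+1%:R by rewrite -natrM ler_nat; lia.
rewrite ler_pdivrMr ?mulr_gt0 ?ltr0n //.
set x := negbin c K; set y := negbin c k; set z := negbin c (absz (k%:Z + s)).
move=> xK x0 xz xy; have xyz : x ^+ 2 <= y * z by rewrite expr2 ler_pM.
have k0 : (0 : R) <= k.+1%:R by [].
have := ler_wpM2r (sqr_ge0 x) K2; have := ler_wpM2l k0 xyz; nra.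
Qed.

Definition hsum M : R := \sum_(k < M) 1 / k.+1%:R.

Lemma hsum_pow2 j : j%:R / 2 <= hsum (2 ^ j).
Proof.
elim: j => [|j IH]; first by rewrite mul0r sumr_ge0 // => k _; rewrite divr_ge0 ?ler0n.
rewrite expnS mul2n -addnn /hsum big_split_ord /= -/(hsum _) -natr1 mulrDl lerD //.
(* Each of the 2^j terms of the upper half is at least 1 / 2^(j+1). *)
apply: (@le_trans _ _ (\sum_(k < 2 ^ j) 1 / (2 ^ j.+1)%:R)).
  rewrite sumr_const card_ord -mulr_natl expnS natrM le_eqVlt; apply/orP; left.
  by apply/eqP; field; rewrite pnatr_eq0 -lt0n expn_gt0.
apply: ler_sum => k _; rewrite !div1r lef_pV2 ?posrE ?ltr0n ?expn_gt0 // ler_nat.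
by rewrite expnS mul2n -addnn -addnS leq_add2l.
Qed.

Lemma hsum_unbounded (B : R) M0 : exists M, (M0 <= M)%N /\ B < hsum M.
Proof.
set j := maxn (Num.Def.archi_bound `|2 * B|) M0.
have jB : 2 * B < j%:R.
  apply: le_lt_trans (ler_norm _) _; apply: lt_le_trans (archi_boundP (normr_ge0 _)) _.
  by rewrite ler_nat leq_maxl.
exists (2 ^ j)%N; split; last by apply: lt_le_trans (hsum_pow2 j); lra.
exact: leq_trans (leq_maxr _ _) (ltnW (ltn_expl _ (ltnSn 1))).
Qed.

Lemma hsum_le_sum (f : nat -> R) S M : (forall k, 0 <= f k) ->
  (forall k, (S <= k)%N -> 1 / k.+1%:R <= f k) -> hsum M <= \sum_(k < M) f k + S%:R.
Proof.
move=> f0 fS; apply: (@le_trans _ _ (\sum_(k < M) f k + (minn M S)%:R)); last first.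
  by rewrite lerD2l ler_nat geq_minr.
elim: M => [|M IH]; first by rewrite /hsum !big_ord0 min0n addr0.
rewrite /hsum !big_ord_recr /= -/(hsum M).
have h1 : 1 / M.+1%:R <= 1 :> R by rewrite ler_pdivrMr ?ltr0n // mul1r ler1n.
case: (leqP S M) => SM.
  rewrite (minn_idPr (leq_trans SM (leqnSn M))) (minn_idPr SM) in IH *.
  by rewrite addrAC lerD // fS.
rewrite (minn_idPl SM) (minn_idPl (ltnW SM)) in IH *.
rewrite -natr1 addrACA lerD //.
by apply: ler_wpDl (f0 M) _; rewrite natr1.
Qed.

Lemma mem_symrange N (n : int) : (n \in symrange N) = (- N%:Z <= n <= N%:Z).
Proof.
apply/mapP/idP => [[i] | nN]; first by rewrite mem_iota => /andP[_ iN] ->; lia.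
exists (absz (n + N%:Z)); last by rewrite gez0_abs ?addrK //; lia.
by rewrite mem_iota /=; lia.
Qed.

Lemma uniq_symrange N : uniq (symrange N).
Proof.
by rewrite map_inj_uniq ?iota_uniq // => x y /(congr1 (fun z => z + N%:Z)); rewrite !subrK => -[].
Qed.

Definition sumsq al0 a s N : R :=
  \sum_(n <- symrange N) tip (term al0 a s n) (term al0 a s n).

Lemma sumsq_ge (al0 : R) a s N : 0 < (a%:~R * al0) ^+ 2 ->
  \sum_(k < N.+1) tip (term al0 a s k) (term al0 a s k) <= sumsq al0 a s N.
Proof.
move=> c0; rewrite /sumsq /symrange big_map -addnn -addnS iotaD add0n big_cat.
have -> : iota N N.+1 = map (addn N) (iota 0 N.+1) by rewrite -iotaDl addn0.
rewrite big_map -[iota 0 N.+1]/(index_iota 0 N.+1) big_mkord.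
apply: ler_wpDl; first by apply: sumr_ge0 => n _; rewrite tip_term eqxx mulr_ge0 ?ynorm_ge0.
by under [X in _ <= X]eq_bigr => k _ do rewrite PoszD addrAC subrr add0r.
Qed.

Lemma sumsq_unbounded (al0 : R) a s :
  1 / 2 <= (a%:~R * al0) ^+ 2 -> (a%:~R * al0) ^+ 2 <= 1 ->
  forall (B : R) N0, exists N, (N0 <= N)%N /\ B < sumsq al0 a s N.
Proof.
move=> c12 c1 B N0; have c0 : 0 < (a%:~R * al0) ^+ 2 by lra.
have [M [N0M BM]] := hsum_unbounded (8 * B + (absz s)%:R) N0.+1.
have M0 : (0 < M)%N by apply: leq_trans N0M.
exists M.-1; split; first by rewrite -ltnS prednK.
apply: lt_le_trans (sumsq_ge _ _ _ _ c0); rewrite prednK //.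
pose d (k : nat) := tip (term al0 a s k) (term al0 a s k).
have d0 k : 0 <= 8 * d k by rewrite mulr_ge0 // /d tip_term eqxx mulr_ge0 ?ynorm_ge0.
have dS k : (absz s <= k)%N -> 1 / k.+1%:R <= 8 * d k.
  move=> sk; have := tip_term_lb al0 a s k c12 c1 sk.
  by rewrite !ler_pdivrMr ?mulr_gt0 ?ltr0n // /d mulrCA mulrA.
have := hsum_le_sum _ _ M d0 dS; rewrite -big_distrr /= /d; lra.
Qed.

Lemma tip_psum (al0 : R) a s X Y :
  tip (psum al0 a s X) (psum al0 a s Y) = sumsq al0 a s (minn X Y).
Proof.
have diag n m : tip (term al0 a s n) (term al0 a s m) =
    if n == m then tip (term al0 a s n) (term al0 a s n) else 0.
  by rewrite !tip_term eqxx; case: eqP.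
rewrite /psum /sumsq tip_flattenl big_map.
under eq_bigr => n _ do
  rewrite tip_flattenr big_map (eq_bigr _ (fun m _ => diag n m)) sum_if_eq ?uniq_symrange //.
rewrite -big_mkcond -big_filter; apply: perm_big; apply: uniq_perm.
- exact/filter_uniq/uniq_symrange.
- exact: uniq_symrange.
by move=> n; rewrite mem_filter !mem_symrange; apply/idP/idP; lia.
Qed.

Lemma sqr_bounds (x : R) : 1 / Num.sqrt 2 <= `|x| <= 1 -> 1 / 2 <= x ^+ 2 <= 1.
Proof.
case/andP => lo hi; rewrite -(real_normK (num_real x)).
apply/andP; split; last exact: exprn_ile1.
have s2 : Num.sqrt (2 : R) ^+ 2 = 2 by rewrite sqr_sqrtr ?ler0n.
have s0 : 0 < Num.sqrt (2 : R) by rewrite sqrtr_gt0 ltr0n.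
move: lo; rewrite ler_pdivrMr // => lo.
have : 1 <= (`|x| * Num.sqrt 2) ^+ 2 by apply: exprn_ege1.
by rewrite exprMn s2; lra.
Qed.

End Norms.

Theorem mainTheorem2 (R : realType) (alpha0 : R) (a s : int) :
  0 < `|alpha0| <= 1 ->
  1 / Num.sqrt 2 <= `|a%:~R * alpha0| <= 1 ->
  (forall n m : int, n != m -> tip (term alpha0 a s n) (term alpha0 a s m) = 0) /\
  ~ (exists B : R, forall N : nat,
        \sum_(n <- symrange N) tip (term alpha0 a s n) (term alpha0 a s n) <= B) /\
  ~ tcauchy (psum alpha0 a s).
Proof.
(* Only alpha^2 = (a alpha0)^2 enters. *)
move=> _ /sqr_bounds/andP[c12 c1].
have unbounded := sumsq_unbounded alpha0 a s c12 c1.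
split; first by move=> n m nm; rewrite tip_term (negbTE nm).
split.
  case=> B sumB; have [N [_ BN]] := unbounded B 0%N.
  by have := sumB N; rewrite -/(sumsq alpha0 a s N); lra.
move=> /(_ 1 ltr01) [N0 cauchy].
have [M [N0M BM]] := unbounded (sumsq alpha0 a s N0 + 1) N0.
have /= := cauchy M N0 N0M (leqnn N0).
by rewrite tip_cat_opp !tip_psum !minnn (minn_idPr N0M) (minn_idPl N0M); lra.
Qed.
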